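(* Let $u$ be a fast decreasing distribution on $\mathbb R^D$ (acting on $\mathbb C[\boldsymbol x]$) and $\mathcal Q_1,\mathcal Q_2\in\mathbb C[\boldsymbol x]$ coprime of degrees $m_1,m_2$ with $Z(\mathcal Q_2)\cap\operatorname{supp}u=\varnothing$. Let $\check u$ be a linear functional with $\mathcal Q_2\check u=u$ and put $\hat u=\mathcal Q_1\check u$ (so $\mathcal Q_2\hat u=\mathcal Q_1u$); assume $u$ and $\hat u$ quasi-definite, and let $R=\langle\check u,P(\boldsymbol x)\chi(\boldsymbol x)^\top\rangle$. Fix $k\in\mathbb Z_+$ and distinct nodes $\boldsymbol p_1,\dots,\boldsymbol p_{r_1}\in Z(\mathcal Q_1)$, $r_1=N_{k+m_1-1}-N_{k-1}$, and let $F=\big(\mathcal Q_1(\boldsymbol\Lambda)\big)_{[k],[k+m_1]}$. (i) If the matrix with block rows $\big(R_{[l],[0]},\dots,R_{[l],[k-1]},P_{[l]}(\boldsymbol p_1),\dots,P_{[l]}(\boldsymbol p_{r_1})\big)$, $l=0,\dots,k+m_1-1$, is nonsingular (this is the poisedness condition when $k<m_2$), then $$\hat P_{[k]}(\boldsymbol x)=\frac{F}{\mathcal Q_1(\boldsymbol x)}\Theta_*\begin{pmatrix}R_{[0],[0]}&\cdots&R_{[0],[k-1]}&P_{[0]}(\boldsymbol p_1)&\cdots&P_{[0]}(\boldsymbol p_{r_1})&P_{[0]}(\boldsymbol x)\\ \vdots&&\vdots&\vdots&&\vdots&\vdots\\ R_{[k+m_1],[0]}&\cdots&R_{[k+m_1],[k-1]}&P_{[k+m_1]}(\boldsymbol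 p_1)&\cdots&P_{[k+m_1]}(\boldsymbol p_{r_1})&P_{[k+m_1]}(\boldsymbol x)\end{pmatrix}$$ and $\hat H_{[k]}=F\,\Theta_*(\cdots)$ where the matrix is the same with last column $R_{[l],[k]}$ ($l=0,\dots,k+m_1$) in place of $P_{[l]}(\boldsymbol x)$. (ii) If $k\ge m_2$ and $\mathcal M_k=\{\boldsymbol\beta_1,\dots,\boldsymbol\beta_{r_2}\}$, $r_2=N_{k-1}-N_{k-m_2-1}$, are distinct multi-indices with $|\boldsymbol\beta_i|<k$ such that the set $\mathcal M_k\cup\{\boldsymbol p_j\}$ is poised, i.e. the matrix with block rows $\big(R_{[l],\boldsymbol\beta_1},\dots,R_{[l],\boldsymbol\beta_{r_2}},P_{[l]}(\boldsymbol p_1),\dots,P_{[l]}(\boldsymbol p_{r_1})\big)$, $l=k-m_2,\dots,k+m_1-1$, is nonsingular, then $$\hat P_{[k]}(\boldsymbol x)=\frac{F}{\mathcal Q_1(\boldsymbol x)}\Theta_*\begin{pmatrix}R_{[k-m_2],\boldsymbol\beta_1}&\cdots&R_{[k-m_2],\boldsymbol\beta_{r_2}}&P_{[k-m_2]}(\boldsymbol p_1)&\cdots&P_{[k-m_2]}(\boldsymbol p_{r_1})&P_{[k-m_2]}(\boldsymbol x)\\ \vdots&&\vdots&\vdots&&\vdots&\vdots\\ R_{[k+m_1],\boldsymbol\beta_1}&\cdots&R_{[k+m_1],\boldsymbol\beta_{r_2}}&P_{[k+m_1]}(\boldsymbol p_1)&\cdots&P_{[k+m_1]}(\boldsymbol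 p_{r_1})&P_{[k+m_1]}(\boldsymbol x)\end{pmatrix},$$ $\hat H_{[k]}\big((\mathcal Q_2(\boldsymbol\Lambda))_{[k-m_2],[k]}\big)^\top=F\,\Theta_*(\cdots)$ with the same matrix but last column $(H_{[k-m_2]},0,\dots,0)^\top$ (block rows $l=k-m_2,\dots,k+m_1$), and $\hat H_{[k]}=F\,\Theta_*(\cdots)$ with the same matrix but last column $R_{[l],[k]}$, $l=k-m_2,\dots,k+m_1$.
   Context: $[k]=\{\boldsymbol\alpha\in\mathbb Z_+^D:|\boldsymbol\alpha|=k\}$, $N_k=\binom{D+k}{D}=\sum_{j\le k}|[j]|$, $N_{-1}=0$. Multi-indices ordered by graded lexicographic order; $\chi(\boldsymbol x)$ vector of monomials in this order with blocks $\chi_{[k]}$; semi-infinite matrices have blocks $A_{[k],[l]}$; $A_{[l],\boldsymbol\beta}$ is the column of block row $[l]$ indexed by $\boldsymbol\beta$. $Z(\mathcal Q)\subset\mathbb C^D$ is the zero set of $\mathcal Q$. Spectral matrices $(\Lambda_a)_{\boldsymbol\alpha,\boldsymbol\beta}=\delta_{\boldsymbol\alpha+\boldsymbol e_a,\boldsymbol\beta}$, $\mathcal Q(\boldsymbol\Lambda)=\mathcal Q(\Lambda_1,\dots,\Lambda_D)$. For a linear functional $u$, $\langle Qu,P\rangle:=\langle u,QP\rangle$; moment matrix $G=\langle u,\chi\chi^\top\rangle$; quasi-definite: all block truncations nonsingular; then $G=S^{-1}HS^{-\top}$ with $S$ block lower unitriangular, $H$ block diagonal with blocks $H_{[k]}$;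 $P=S\chi$ with blocks $P_{[k]}$ are the monic multivariate orthogonal polynomials. Hatted symbols refer to $\hat u$. Last quasi-determinant: $\Theta_*\begin{pmatrix}A&B\\C&D\end{pmatrix}=D-CA^{-1}B$ with last displayed block row/column. *)

From HB Require Import structures.
From mathcomp Require Import all_boot all_order all_algebra.
From mathcomp Require Import mpoly.
From mathcomp Require Import all_classical all_reals all_analysis.
From mathcomp Require Import complex.

Set Implicit Arguments.
Unset Strict Implicit.
Unset Printing Implicit Defensive.

Import Order.TTheory GRing.Theory Num.Theory.
Import numFieldNormedType.Exports.
Local Open Scope ring_scope.

(* All sequences of D naturals summing to k, in decreasing lexicographic order
   (first variable first): for k = 1 this gives e_1, e_2, ..., e_D, so that
   chi = (1, x1, ..., xD, x1^2, x1 x2, ...). *)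
Fixpoint glex_seq (D k : nat) : seq (seq nat) :=
  match D with
  | 0 => if k == 0%N then [:: [::]] else [::]
  | D'.+1 => flatten [seq [seq (k - a)%N :: s | s <- glex_seq D' a]
                     | a <- iota 0 k.+1]
  end.

Definition mi_of_seq (D : nat) (s : seq nat) : 'X_{1..D} :=
  [multinom nth 0%N s i | i < D].

Definition blk (D k : nat) : seq 'X_{1..D} := map (@mi_of_seq D) (glex_seq D k).
Definition bsz (D k : nat) : nat := size (blk D k).
(* all multi-indices alpha with |alpha| < n, in graded-lex order;
   its size is N_{n-1} (with N_{-1} = 0) *)
Definition low (D n : nat) : seq 'X_{1..D} :=
  flatten [seq blk D j | j <- iota 0 n].
Definition mid (D a b : nat) : seq 'X_{1..D} :=
  flatten [seq blk D j | j <- iota a (b - a)].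
(* Nm1 D k = N_{k-1} = sum_{j < k} |[j]| *)
Definition Nm1 (D k : nat) : nat := size (low D k).

Section Algebraic.
Variable R : rcfType.
Local Notation C := (complex R).
Variable D : nat.
Local Notation Pol := (mpoly D C).
Local Notation MI := ('X_{1..D}).

Definition ev (p : 'rV[C]_D) (P : Pol) : C := meval (fun i => p 0 i) P.

Definition inZ (Q : Pol) (p : 'rV[C]_D) : Prop := ev p Q = 0.

Definition mcoprime (Q1 Q2 : Pol) : Prop :=
  forall d : Pol, (exists a, Q1 = d * a) -> (exists b, Q2 = d * b) ->
    (msize d <= 1)%N.

Definition lin_functional (L : Pol -> C) : Prop :=
  forall (a : C) (p q : Pol), L (a *: p + q) = a * L p + L q.

(* block truncation of the moment matrix G = <L, chi chi^T>:
   rows/columns indexed by the multi-indices of length < n *)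
Definition mom (L : Pol -> C) (n : nat) : 'M[C]_(Nm1 D n) :=
  \matrix_(i, j) L ('X_[nth 0%MM (low D n) i] * 'X_[nth 0%MM (low D n) j]).

Definition quasi_definite (L : Pol -> C) : Prop :=
  forall n : nat, mom L n \in unitmx.

(* The monic orthogonal polynomial P_alpha (entry alpha of P = S chi), given
   explicitly by the Gauss-Borel (Schur complement) formula
     P_[k] = chi_[k] - G_{[k],<k} (G_{<k,<k})^{-1} chi_{<k},   k = |alpha|. *)
Definition mop (L : Pol -> C) (al : MI) : Pol :=
  let n := mdeg al in
  'X_[al] - \sum_(i < Nm1 D n) \sum_(j < Nm1 D n)
     (L ('X_[al] * 'X_[nth 0%MM (low D n) i]) * (invmx (mom L n)) i j)
        *: 'X_[nth 0%MM (low D n) j].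

Definition Pcol (L : Pol -> C) (k : nat) (x : 'rV[C]_D) : 'cV[C]_(bsz D k) :=
  \col_(i < bsz D k) ev x (mop L (nth 0%MM (blk D k) i)).

(* H_[k] = <L, P_[k] chi_[k]^T> (= <L, P_[k] P_[k]^T>) *)
Definition Hblk (L : Pol -> C) (k : nat) : 'M[C]_(bsz D k) :=
  \matrix_(i, j) L (mop L (nth 0%MM (blk D k) i) * 'X_[nth 0%MM (blk D k) j]).

Definition Rent (Lc L : Pol -> C) (al be : MI) : C := Lc (mop L al * 'X_[be]).

(* entry (alpha, beta) of Q(Lambda) = sum_gamma Q_gamma Lambda^gamma, where
   (Lambda^gamma)_{alpha,beta} = delta_{alpha+gamma, beta} *)
Definition specQ (Q : Pol) (al be : MI) : C :=
  \sum_(g <- msupp Q) Q@_g * ((al + g)%MM == be)%:R.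

Definition specblk (Q : Pol) (k l : nat) : 'M[C]_(bsz D k, bsz D l) :=
  \matrix_(i, j) specQ Q (nth 0%MM (blk D k) i) (nth 0%MM (blk D l) j).

Definition rowsmx (rs : seq MI) (w : nat) (f : MI -> nat -> C)
  : 'M[C]_(size rs, w) := \matrix_(i, j) f (nth 0%MM rs i) j.

Definition colent (Lc L : Pol -> C) (bs : seq MI) (ps : seq 'rV[C]_D)
  (al : MI) (j : nat) : C :=
  if (j < size bs)%N then Rent Lc L al (nth 0%MM bs j)
  else ev (nth 0 ps (j - size bs)) (mop L al).

Definition CGmx (Lc L : Pol -> C) (bs : seq MI) (ps : seq 'rV[C]_D)
  (rs : seq MI) : 'M[C]_(size rs) :=
  rowsmx rs (size rs) (colent Lc L bs ps).

Definition CGfull (Lc L : Pol -> C) (bs : seq MI) (ps : seq 'rV[C]_D)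
  (rs : seq MI) (top : nat) (w : nat) (g : MI -> nat -> C)
  : 'M[C]_(size rs + bsz D top, size rs + w) :=
  block_mx (CGmx Lc L bs ps rs) (rowsmx rs w g)
           (rowsmx (blk D top) (size rs) (colent Lc L bs ps))
           (rowsmx (blk D top) w g).

End Algebraic.

Definition Theta_star (F : fieldType) (n h w : nat)
  (M : 'M[F]_(n + h, n + w)) : 'M[F]_(h, w) :=
  drsubmx M - dlsubmx M *m invmx (ulsubmx M) *m ursubmx M.

(* Fast decreasing (rapidly decreasing) distributions on R^D: the dual O'_c  *)
(* of the space O_c of smooth functions all of whose derivatives grow at     *)
(* most polynomially (inductive limit over k of the Frechet spaces O_{c,k}). *)
(* A complex distribution is represented by its (R-linear) action on real    *)
(* valued functions: T(f + i g) = T f + i T g.                               *)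
Section Distributions.
Variable R : realType.
Variable D : nat.
Local Notation V := ('rV[R]_D).

Definition ebasis (a : 'I_D) : V := delta_mx 0 a.

Definition pder (s : seq 'I_D) (f : V -> R) : V -> R :=
  foldr (fun a g => fun x => derive g x (ebasis a)) f s.

Definition smooth (f : V -> R) : Prop :=
  forall s : seq 'I_D, continuous (pder s f) /\
    forall (a : 'I_D) (x : V), derivable (pder s f) x (ebasis a).

Definition weight (k : nat) (x : V) : R := (1 + \sum_i (x 0 i) ^+ 2) ^+ k.

Definition OcK (k : nat) (f : V -> R) : Prop :=
  smooth f /\ forall s, exists M : R, forall x, `|pder s f x| <= M * weight k x.

Definition Oc (f : V -> R) : Prop := exists k, OcK k f.

Definition fast_decreasing (T : (V -> R) -> complex R) : Prop :=
  (forall (a : R) (f g : V -> R), Oc f -> Oc g ->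
     T (fun x => a * f x + g x) = (a%:C)%C * T f + T g) /\
  (* continuous on each O_{c,k}: bounded by a seminorm
     sup_{|s| <= m} sup_x |d^s f(x)| / (1+|x|^2)^k *)
  (forall k : nat, exists (c : R) (m : nat), forall f, OcK k f ->
     forall M : R,
       (forall s x, (size s <= m)%N -> `|pder s f x| <= M * weight k x) ->
       `|T f| <= ((c * M)%:C)%C).

Definition supported_in (U : set V) (f : V -> R) : Prop :=
  exists K : set V, compact K /\ (K `<=` U)%classic /\
    forall x, ~ K x -> f x = 0.

Definition in_supp (T : (V -> R) -> complex R) (x : V) : Prop :=
  forall U : set V, open U -> U x ->
    exists f, smooth f /\ supported_in U f /\ T f <> 0.

Definition realpt (x : V) : 'rV[complex R]_D := \row_i ((x 0 i)%:C)%C.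

Definition polyact (T : (V -> R) -> complex R) (P : mpoly D (complex R))
  : complex R :=
  T (fun x => complex.Re (ev (realpt x) P)) + 'i%C * T (fun x => complex.Im (ev (realpt x) P)).

End Distributions.

From HB Require Import structures.
From mathcomp Require Import all_boot all_order all_algebra.
From mathcomp Require Import mpoly.
From mathcomp Require Import all_classical all_reals all_analysis.
From mathcomp Require Import complex.
From mathcomp Require Import zify ring.
Import Order.TTheory GRing.Theory Num.Theory.
Import numFieldNormedType.Exports.
Local Open Scope ring_scope.
Set Implicit Arguments.
Unset Strict Implicit.
Unset Printing Implicit Defensive.

(* For |alpha| = k the polynomial Q1 P^_alpha has total degree k + m1 and its
   coefficients of degree k + m1 are the row alpha of F = Q1(Lambda)_[k],[k+m1].
   Expanding it in the monic orthogonal polynomials P of u thus gives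
     Q1 P^_alpha = sum_(|a| < k + m1) c_a P_a + sum_(|a| = k + m1) F_alpha,a P_a.
   Every column functional of the displayed matrix kills Q1 P^_alpha: on one
   hand u-check (Q1 P^_alpha x^beta) = u-hat (P^_alpha x^beta) = 0 for
   |beta| < k, on the other hand Q1 vanishes at the nodes. If the square part A
   of the matrix is nonsingular, this forces c = - F X A^-1, so that any linear
   functional Phi satisfies Phi (Q1 P^_alpha) = F Theta_* [A, Phi(P); X, Phi(P)].
   The formulas are the cases where Phi is the evaluation at x, u-check against
   x^gamma with |gamma| = k, and u against x^gamma with |gamma| = k - m2. In
   case (ii) the coefficients c_a with |a| < k - m2 vanish beforehand, because
   Q1 P^_alpha is u-orthogonal to every polynomial of degree < k - m2. *)

Lemma glex_seqS D k :
  glex_seq D.+1 k = [seq (k - a)%N :: s | a <- iota 0 k.+1, s <- glex_seq D a].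
Proof. by []. Qed.

Lemma mem_glex_seq D k s : (s \in glex_seq D k) = (size s == D) && (sumn s == k).
Proof.
elim: D k s => [|D IH] k s.
  case: k => [|k] /=; first by rewrite inE; case: s.
  by rewrite in_nil; case: s => //= x s; rewrite andbF.
rewrite glex_seqS; apply/allpairsPdep/idP => [[a [t [ha ht ->]]]|].
  move: ha ht; rewrite mem_iota ltnS IH => /andP [_ ak] /andP [/eqP <- /eqP ta].
  by rewrite /= ta subnK ?eqxx.
case: s => [|x t] // /andP [st /eqP sk]; exists (sumn t), t.
rewrite -sk addnK mem_iota ltnS leq_addl IH -eqSS st eqxx.
by split.
Qed.

Lemma uniq_glex_seq D k : uniq (glex_seq D k).
Proof.
elim: D k => [|D IH] k; first by case: k.
rewrite glex_seqS; apply: allpairs_uniq_dep => [|a _ //|]; first exact: iota_uniq.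
move=> [a s] [b t] /allpairsPdep [a' [s' [ha _ [-> ->]]]].
move=> /allpairsPdep [b' [t' [hb _ [-> ->]]]] /= [e ->].
move: ha hb e; rewrite !mem_iota !ltnS => /andP [_ ?] /andP [_ ?] e.
by have -> : a' = b' by lia.
Qed.

Lemma mdeg_mi_of_seq D s : size s = D -> mdeg (mi_of_seq D s) = sumn s.
Proof.
move=> sD; rewrite mdegE (eq_bigr (fun i : 'I_D => nth 0%N s i)) => [|i _]; last first.
  by rewrite mnmE.
by rewrite sumnE (big_nth 0%N) sD big_mkord.
Qed.

Lemma mem_blk D k m : (m \in blk D k) = (mdeg m == k).
Proof.
apply/mapP/idP => [[s]|/eqP <-].
  by rewrite mem_glex_seq => /andP [/eqP sD /eqP <-] ->; rewrite mdeg_mi_of_seq.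
exists [seq m i | i <- enum 'I_D].
  rewrite mem_glex_seq size_map size_enum_ord eqxx sumnE big_map big_enum mdegE.
  by apply/eqP/eq_bigl => i; rewrite inE.
by apply/mnmP => i; rewrite mnmE (nth_map i) ?size_enum_ord // nth_ord_enum.
Qed.

Lemma uniq_blk D k : uniq (blk D k).
Proof.
rewrite map_inj_in_uniq ?uniq_glex_seq // => s t.
rewrite !mem_glex_seq => /andP [/eqP sD _] /andP [/eqP tD _] e.
apply: (@eq_from_nth _ 0%N) => [|i]; first by rewrite sD tD.
rewrite sD => lt_iD.
by have := congr1 (fun m : 'X_{1..D} => m (Ordinal lt_iD)) e; rewrite !mnmE.
Qed.

Lemma lowS D n : low D n.+1 = low D n ++ blk D n.
Proof. by rewrite /low -addn1 iotaD map_cat flatten_cat /= cats0. Qed.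

Lemma mem_low D n m : (m \in low D n) = (mdeg m < n)%N.
Proof.
elim: n => [|n IH]; first by rewrite ltn0.
by rewrite lowS mem_cat IH mem_blk orbC -leq_eqVlt ltnS.
Qed.

Lemma uniq_low D n : uniq (low D n).
Proof.
elim: n => [//|n IH]; rewrite lowS cat_uniq IH uniq_blk andbT /=.
by apply/hasPn => m; rewrite mem_blk mem_low => /eqP ->; rewrite ltnn.
Qed.

Lemma low_cat_mid D a b : (a <= b)%N -> low D b = low D a ++ mid D a b.
Proof.
by move=> ab; rewrite /low /mid -{1}(subnKC ab) iotaD map_cat flatten_cat.
Qed.

Lemma mem_mid D a b m : (a <= b)%N -> (m \in mid D a b) = (a <= mdeg m < b)%N.
Proof.
move=> ab; apply/flatten_mapP/idP => [[j]|mm].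
  by rewrite mem_iota subnKC // mem_blk => jn /eqP ->.
by exists (mdeg m); rewrite ?mem_iota ?subnKC ?mm ?mem_blk.
Qed.

Lemma size_mid D a b : (a <= b)%N -> size (mid D a b) = (Nm1 D b - Nm1 D a)%N.
Proof. by move=> ab; rewrite /Nm1 (low_cat_mid D ab) size_cat addKn. Qed.

Lemma mdeg_nth_blk D k i : (i < bsz D k)%N -> mdeg (nth 0%MM (blk D k) i) = k.
Proof. by move=> lt_i; apply/eqP; rewrite -mem_blk mem_nth. Qed.

Lemma leq_Nm1 D a b : (a <= b)%N -> (Nm1 D a <= Nm1 D b)%N.
Proof. by move=> ab; rewrite /Nm1 (low_cat_mid D ab) size_cat leq_addr. Qed.

Lemma msizeM_leq_add (K : idomainType) D (p q : {mpoly K[D]}) a b :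
  (msize p <= a.+1)%N -> (msize q <= b)%N -> (msize (p * q) <= a + b)%N.
Proof.
have [->|p0] := eqVneq p 0; first by rewrite mul0r msize0.
have [->|q0] := eqVneq q 0; first by rewrite mulr0 msize0.
by rewrite msizeM // -subn1 leq_subLR addnA add1n => /leq_add; apply.
Qed.

Section MsizeBounds.
Variables (K : ringType) (D : nat).
Implicit Types (p q : {mpoly K[D]}) (m : 'X_{1..D}).

Lemma msize_leP p n : reflect (forall m, (n <= mdeg m)%N -> p@_m = 0) (msize p <= n)%N.
Proof.
apply: (iffP idP) => [le_pn m le_nm|p_low].
  by apply/eqP; rewrite mcoeff_eq0 msize_mdeg_ge // (leq_trans le_pn).
rewrite msizeE; apply/bigmax_leqP_seq => m; rewrite mcoeff_msupp => nz_m _.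
by rewrite ltnNge; apply: contra nz_m => /p_low ->.
Qed.

Lemma msize_sum_leq (I : Type) (r : seq I) (P : pred I) (F : I -> {mpoly K[D]}) n :
  (forall i, P i -> msize (F i) <= n)%N -> (msize (\sum_(i <- r | P i) F i) <= n)%N.
Proof.
move=> le_Fn; elim/big_ind: _ => //; first by rewrite msize0.
by move=> p q le_pn le_qn; rewrite (leq_trans (msizeD_le p q)) // geq_max le_pn.
Qed.

Lemma msizeZ_leq (c : K) p n : (msize p <= n)%N -> (msize (c *: p) <= n)%N.
Proof. exact/leq_trans/msizeZ_le. Qed.

Lemma mcoeff_sumX (s : seq 'X_{1..D}) (f : 'X_{1..D} -> K) m : uniq s ->
  (\sum_(b <- s) f b *: 'X_[b])@_m = if m \in s then f m else 0.
Proof.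
move=> uniq_s; rewrite raddf_sum /=.
under eq_bigr => b _ do rewrite mcoeffZ mcoeffX.
case: ifP => [ms|/negbT ms].
  rewrite (bigD1_seq m) //= eqxx mulr1 big1 ?addr0 // => b /negbTE ->.
  by rewrite mulr0.
rewrite big_seq big1 // => b bs; case: eqP => [eq_bm|_]; last by rewrite mulr0.
by rewrite -eq_bm bs in ms.
Qed.

Lemma msize_sub_top p n : (msize p <= n.+1)%N ->
  (msize (p - \sum_(a <- blk D n) p@_a *: 'X_[a]) <= n)%N.
Proof.
move=> /msize_leP p_low; apply/msize_leP => m le_nm.
rewrite mcoeffB mcoeff_sumX ?uniq_blk // mem_blk.
case: eqP => [_|ne]; first by rewrite subrr.
by rewrite p_low ?subr0 // ltn_neqAle le_nm andbT eq_sym; apply/eqP.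
Qed.

Lemma mpoly_low_expand p n : (msize p <= n)%N ->
  p = \sum_(a <- low D n) p@_a *: 'X_[a].
Proof.
move=> /msize_leP p_low; apply/mpolyP => m; rewrite mcoeff_sumX ?uniq_low // mem_low.
by case: ltnP => // /p_low.
Qed.

End MsizeBounds.

Section OrthogonalPolynomials.
Variables (R : rcfType) (D : nat).
Local Notation C := (complex R).
Local Notation Pol := (mpoly D C).
Local Notation MI := ('X_{1..D}).

Lemma lin_functional_mulr (L : Pol -> C) (q : Pol) : lin_functional L ->
  lin_functional (fun p => L (p * q)).
Proof. by move=> hL a p p' /=; rewrite mulrDl -scalerAl hL. Qed.

Lemma lin_functional_mull (L : Pol -> C) (q : Pol) : lin_functional L ->
  lin_functional (fun p => L (q * p)).
Proof. by move=> hL a p p' /=; rewrite mulrDr -scalerAr hL. Qed.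

Lemma lin_functional_ev (x : 'rV[C]_D) : lin_functional (ev x).
Proof. by move=> a p q; rewrite /ev mevalD mevalZ. Qed.

Lemma mcoeffMX_specQ (Q : Pol) (al be : MI) : (Q * 'X_[al])@_be = specQ Q al be.
Proof.
rewrite {1}(mpolyE Q) mulr_suml raddf_sum /specQ; apply: eq_bigr => g _.
by rewrite -scalerAl -mpolyXD /= mcoeffZ mcoeffX addmC.
Qed.

Variable L : Pol -> C.
Hypothesis hL : lin_functional L.

Lemma lin_functionalD p q : L (p + q) = L p + L q.
Proof. by have := hL 1 p q; rewrite scale1r mul1r. Qed.

Lemma lin_functional0 : L 0 = 0.
Proof. by apply: (@addrI _ (L 0)); rewrite addr0 -lin_functionalD addr0. Qed.

Lemma lin_functionalZ c p : L (c *: p) = c * L p.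
Proof. by have := hL c p 0; rewrite !addr0 lin_functional0 addr0. Qed.

Lemma lin_functionalN p : L (- p) = - L p.
Proof. by rewrite -scaleN1r lin_functionalZ mulN1r. Qed.

Lemma lin_functionalB p q : L (p - q) = L p - L q.
Proof. by rewrite lin_functionalD lin_functionalN. Qed.

Lemma lin_functional_sum (I : Type) (r : seq I) (P : pred I) (F : I -> Pol) :
  L (\sum_(i <- r | P i) F i) = \sum_(i <- r | P i) L (F i).
Proof. exact: (big_morph L lin_functionalD lin_functional0). Qed.

Lemma msize_mop_subX (al : MI) : (msize (mop L al - 'X_[al]) <= mdeg al)%N.
Proof.
rewrite /mop addrAC subrr add0r msizeN.
do 2![apply: msize_sum_leq => ? _]; apply: msizeZ_leq.
by rewrite msizeX -mem_low mem_nth.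
Qed.

Lemma msize_mop (al : MI) : (msize (mop L al) <= (mdeg al).+1)%N.
Proof.
rewrite -[mop L al](subrK 'X_[al]) (leq_trans (msizeD_le _ _)) // geq_max msizeX.
by rewrite leqnn (leq_trans (msize_mop_subX al)).
Qed.

Lemma mop_orthX (al be : MI) : mom L (mdeg al) \in unitmx ->
  (mdeg be < mdeg al)%N -> L (mop L al * 'X_[be]) = 0.
Proof.
set n := mdeg al; set l := low D n; set G := mom L n => G_unit lt_be.
have [i0 ->] : exists i0 : 'I_(Nm1 D n), be = nth 0%MM l i0.
  rewrite -mem_low in lt_be; exists (Ordinal (etrans (index_mem be l) lt_be)).
  by rewrite /= nth_index.
rewrite /mop -/n -/l mulrBl lin_functionalB mulr_suml lin_functional_sum.
under eq_bigr => i _ do rewrite mulr_suml lin_functional_sum.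
under eq_bigr => i _ do under eq_bigr => j _ do rewrite -scalerAl lin_functionalZ -mulrA.
under eq_bigr => i _ do rewrite -mulr_sumr.
have GinvG i : \sum_j invmx G i j * L ('X_[nth 0%MM l j] * 'X_[nth 0%MM l i0]) = (i == i0)%:R.
  have -> : (i == i0)%:R = (invmx G *m G) i i0 by rewrite mulVmx // mxE.
  by rewrite mxE; apply: eq_bigr => j _; rewrite mxE.
under eq_bigr => i _ do rewrite GinvG.
rewrite (bigD1 i0) //= eqxx mulr1 big1 ?addr0 ?subrr // => i /negbTE ->.
by rewrite mulr0.
Qed.

Lemma mop_orth (al : MI) p : mom L (mdeg al) \in unitmx ->
  (msize p <= mdeg al)%N -> L (mop L al * p) = 0.
Proof.
move=> G_unit /mpoly_low_expand ->; rewrite mulr_sumr lin_functional_sum big_seq big1 // => a.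
by rewrite mem_low => lt_a; rewrite -scalerAr lin_functionalZ mop_orthX // mulr0.
Qed.

Lemma msize_sub_top_mop p n : (msize p <= n.+1)%N ->
  (msize (p - \sum_(a <- blk D n) p@_a *: mop L a) <= n)%N.
Proof.
move=> /msize_sub_top le_n.
have -> : p - \sum_(a <- blk D n) p@_a *: mop L a =
    (p - \sum_(a <- blk D n) p@_a *: 'X_[a]) - \sum_(a <- blk D n) p@_a *: (mop L a - 'X_[a]).
  rewrite -addrA -opprD -big_split /=.
  by under [in RHS]eq_bigr => a _ do rewrite -scalerDr subrKC.
rewrite (leq_trans (msizeD_le _ _)) // geq_max le_n msizeN big_seq.
apply: msize_sum_leq => a; rewrite mem_blk => /eqP <-.
exact/msizeZ_leq/msize_mop_subX.
Qed.

Lemma mop_expand p n : (msize p <= n)%N ->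
  exists c : MI -> C, p = \sum_(a <- low D n) c a *: mop L a.
Proof.
elim: n p => [|n IH] p le_pn.
  by exists (fun=> 0); move: le_pn; rewrite leqn0 msize_poly_eq0 big_nil => /eqP.
have [c e] := IH _ (msize_sub_top_mop le_pn).
exists (fun a => if mdeg a == n then p@_a else c a).
rewrite lowS big_cat /= -[p in LHS](subrK (\sum_(a <- blk D n) p@_a *: mop L a)) e.
congr (_ + _); rewrite big_seq [RHS]big_seq; apply: eq_bigr => a.
  by rewrite mem_low => /ltn_eqF ->.
by rewrite mem_blk => ->.
Qed.

Lemma moment_orth_eq0 n V : mom L n \in unitmx -> (msize V <= n)%N ->
  (forall be : MI, (mdeg be < n)%N -> L (V * 'X_[be]) = 0) -> V = 0.
Proof.
move=> G_unit le_Vn V_orth; pose l := low D n.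
pose v : 'rV[C]_(Nm1 D n) := \row_j V@_(nth 0%MM l j).
have v_ker : v *m mom L n = 0.
  apply/rowP => i; rewrite [RHS]mxE -(V_orth (nth 0%MM l i)) -?mem_low ?mem_nth //.
  rewrite [in RHS](mpoly_low_expand le_Vn) mulr_suml lin_functional_sum.
  rewrite (big_nth 0%MM) big_mkord.
  by rewrite mxE; apply: eq_bigr => j _; rewrite !mxE -scalerAl lin_functionalZ.
have v0 : v = 0 by rewrite -(mulmxK G_unit v) v_ker mul0mx.
rewrite (mpoly_low_expand le_Vn) big_seq big1 // => a a_l.
have := congr1 (fun w : 'rV[C]_(Nm1 D n) => w 0 (Ordinal (etrans (index_mem a l) a_l))) v0.
by rewrite !mxE nth_index // => ->; rewrite scale0r.
Qed.

End OrthogonalPolynomials.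

Lemma Theta_star_solve (F : fieldType) n h w (A : 'M[F]_n) (X : 'M[F]_(h, n))
    (B : 'M[F]_(n, w)) (E : 'M[F]_(h, w)) (c : 'rV[F]_n) (f : 'rV[F]_h) :
  A \in unitmx -> c *m A + f *m X = 0 ->
  c *m B + f *m E = f *m Theta_star (block_mx A B X E).
Proof.
move=> A_unit /eqP; rewrite addr_eq0 => cA.
have -> : c = - (f *m X) *m invmx A by rewrite -(eqP cA) mulmxK.
rewrite /Theta_star block_mxKdr block_mxKdl block_mxKul block_mxKur.
by rewrite mulmxBr !mulNmx !mulmxA addrC.
Qed.

Section ColumnFunctionals.
Variables (R : rcfType) (D : nat).
Local Notation C := (complex R).
Local Notation Pol := (mpoly D C).
Local Notation MI := ('X_{1..D}).

(* [colent Lc u bs ps al j] unfolds to [colfun Lc bs ps j (mop u al)]. *)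
Definition colfun (Lc : Pol -> C) (bs : seq MI) (ps : seq 'rV[C]_D) (j : nat) (p : Pol) : C :=
  if (j < size bs)%N then Lc (p * 'X_[nth 0%MM bs j]) else ev (nth 0 ps (j - size bs)) p.

Lemma lin_functional_colfun Lc bs ps j :
  lin_functional Lc -> lin_functional (colfun Lc bs ps j).
Proof.
move=> hLc a p q; rewrite /colfun; case: ifP => _; first exact: lin_functional_mulr.
exact: lin_functional_ev.
Qed.

Variable u : Pol -> C.

Lemma lin_functional_mop_expand (rs : seq MI) top w (Phi : nat -> Pol -> C)
    (g : MI -> nat -> C) (c : MI -> C) V :
  (forall j, lin_functional (Phi j)) ->
  (forall a j, a \in rs ++ blk D top -> (j < w)%N -> g a j = Phi j (mop u a)) ->
  V = \sum_(a <- rs) c a *: mop u a + \sum_(a <- blk D top) V@_a *: mop u a ->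
  forall j : 'I_w, Phi j V =
    ((\row_r c (nth 0%MM rs r)) *m rowsmx rs w g +
     (\row_t V@_(nth 0%MM (blk D top) t)) *m rowsmx (blk D top) w g) 0 j.
Proof.
move=> Phi_lin g_Phi eV j; have Phi_j := Phi_lin j.
rewrite [in LHS]eV (lin_functionalD Phi_j) !(lin_functional_sum Phi_j).
rewrite !mxE (big_nth 0%MM) big_mkord [X in _ + X](big_nth 0%MM) big_mkord.
congr (_ + _); apply: eq_bigr => t _.
  by rewrite !mxE (lin_functionalZ Phi_j) g_Phi // mem_cat mem_nth.
by rewrite !mxE (lin_functionalZ Phi_j) g_Phi // mem_cat mem_nth ?orbT.
Qed.

Lemma lin_functional_Theta_star Lc bs ps (rs : seq MI) top w (Phi : nat -> Pol -> C)
    (g : MI -> nat -> C) (c : MI -> C) V :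
  lin_functional Lc -> CGmx Lc u bs ps rs \in unitmx ->
  V = \sum_(a <- rs) c a *: mop u a + \sum_(a <- blk D top) V@_a *: mop u a ->
  (forall j, (j < size rs)%N -> colfun Lc bs ps j V = 0) ->
  (forall j, lin_functional (Phi j)) ->
  (forall a j, a \in rs ++ blk D top -> (j < w)%N -> g a j = Phi j (mop u a)) ->
  forall j : 'I_w, Phi j V =
    ((\row_t V@_(nth 0%MM (blk D top) t)) *m Theta_star (CGfull Lc u bs ps rs top w g)) 0 j.
Proof.
move=> hLc CG_unit eV V_ker Phi_lin g_Phi j.
rewrite (lin_functional_mop_expand Phi_lin g_Phi eV) /CGfull.
rewrite -(@Theta_star_solve _ _ _ _ _ _ _ _ (\row_r c (nth 0%MM rs r))) //.
have colfun_lin i : lin_functional (colfun Lc bs ps i) by apply: lin_functional_colfun.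
apply/rowP => i; rewrite [RHS]mxE -(V_ker i) //.
by rewrite (lin_functional_mop_expand (g := colent Lc u bs ps) colfun_lin _ eV).
Qed.

End ColumnFunctionals.

Section BlockQuasiDeterminant.
Variables (R : rcfType) (D : nat).
Local Notation C := (complex R).
Local Notation Pol := (mpoly D C).
Local Notation MI := ('X_{1..D}).

Variables (Lc u : Pol -> C) (Q1 Q2 : Pol) (m1 m2 k : nat) (ps : seq 'rV[C]_D).
Local Notation uh := (fun P => Lc (Q1 * P)).
Hypothesis hLc : lin_functional Lc.
Hypothesis msize_Q1 : (msize Q1 <= m1.+1)%N.
Hypothesis qd_uh : quasi_definite uh.
Hypothesis ps_Q1 : forall p, p \in ps -> inZ Q1 p.

Let luh : lin_functional uh := lin_functional_mull Q1 hLc.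

Definition Q1Phat (i : 'I_(bsz D k)) : Pol := Q1 * mop uh (nth 0%MM (blk D k) i).

Lemma mcoeff_Q1Phat_top i (be : MI) : mdeg be = (k + m1)%N ->
  (Q1Phat i)@_be = specQ Q1 (nth 0%MM (blk D k) i) be.
Proof.
set al := nth 0%MM (blk D k) i => deg_be; have deg_al : mdeg al = k by apply: mdeg_nth_blk.
rewrite /Q1Phat -[mop uh al](subrK 'X_[al]) mulrDr mcoeffD mcoeffMX_specQ.
have le_low : (msize (Q1 * (mop uh al - 'X_[al])) <= k + m1)%N.
  by rewrite addnC -deg_al msizeM_leq_add ?msize_mop_subX.
by move/msize_leP: le_low => ->; rewrite ?add0r // deg_be.
Qed.

Lemma msize_Q1Phat i : (msize (Q1Phat i) <= (k + m1).+1)%N.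
Proof.
have := msizeM_leq_add msize_Q1 (msize_mop uh (nth 0%MM (blk D k) i)).
by rewrite mdeg_nth_blk // addnS addnC.
Qed.

Lemma Q1Phat_expand_low i : exists c : MI -> C,
  Q1Phat i = \sum_(a <- low D (k + m1)) c a *: mop u a +
             \sum_(a <- blk D (k + m1)) (Q1Phat i)@_a *: mop u a.
Proof.
have [c e] := mop_expand u (msize_sub_top_mop u (msize_Q1Phat i)).
by exists c; rewrite -e subrK.
Qed.

Lemma colfun_Q1Phat_eq0 (bs rs : seq MI) i j :
  {in bs, forall be, mdeg be < k}%N -> size rs = (size bs + size ps)%N -> (j < size rs)%N ->
  colfun Lc bs ps j (Q1Phat i) = 0.
Proof.
move=> lt_bs size_rs lt_j; rewrite /colfun /Q1Phat; case: ltnP => [lt_jb|le_bj].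
  rewrite -mulrA; apply: (mop_orthX luh (qd_uh _)).
  by rewrite mdeg_nth_blk // lt_bs // mem_nth.
rewrite /ev mevalM (_ : meval _ Q1 = 0) ?mul0r //; apply: ps_Q1.
by rewrite mem_nth // ltn_subLR // -size_rs.
Qed.

Lemma Q1Phat_Theta (rs bs : seq MI) (w : nat) (Phi : nat -> Pol -> C) (g : MI -> nat -> C) :
  CGmx Lc u bs ps rs \in unitmx ->
  (forall i, exists c : MI -> C,
     Q1Phat i = \sum_(a <- rs) c a *: mop u a +
                \sum_(a <- blk D (k + m1)) (Q1Phat i)@_a *: mop u a) ->
  (forall i j, (j < size rs)%N -> colfun Lc bs ps j (Q1Phat i) = 0) ->
  (forall j, lin_functional (Phi j)) ->
  (forall a j, a \in rs ++ blk D (k + m1) -> (j < w)%N -> g a j = Phi j (mop u a)) ->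
  forall (i : 'I_(bsz D k)) (j : 'I_w),
    Phi j (Q1Phat i) = (specblk Q1 k (k + m1) *m
                        Theta_star (CGfull Lc u bs ps rs (k + m1) w g)) i j.
Proof.
move=> CG_unit Q1Phat_exp Q1Phat_ker Phi_lin g_Phi i j; have [c e] := Q1Phat_exp i.
rewrite (lin_functional_Theta_star hLc CG_unit e (Q1Phat_ker i) Phi_lin g_Phi) !mxE.
by apply: eq_bigr => t _; rewrite !mxE mcoeff_Q1Phat_top // mdeg_nth_blk.
Qed.

Hypothesis Q2_Lc : forall P, Lc (Q2 * P) = u P.
Hypothesis msize_Q2 : (msize Q2 <= m2.+1)%N.
Hypothesis qd_u : quasi_definite u.

Lemma lin_functional_u : lin_functional u.
Proof. by move=> a p q; rewrite -!Q2_Lc; apply: lin_functional_mull. Qed.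

Let lu := lin_functional_u.

Lemma Q1Phat_expand_mid i : (m2 <= k)%N -> exists c : MI -> C,
  Q1Phat i = \sum_(a <- mid D (k - m2) (k + m1)) c a *: mop u a +
             \sum_(a <- blk D (k + m1)) (Q1Phat i)@_a *: mop u a.
Proof.
move=> le_m2k; have [c e] := Q1Phat_expand_low i; exists c.
have le_mid : (k - m2 <= k + m1)%N by lia.
rewrite (low_cat_mid D le_mid) big_cat /= in e.
set V := \sum_(a <- low D (k - m2)) _ in e; set M := \sum_(a <- mid D _ _) _ in e.
set S := \sum_(a <- blk D _) _ in e.
suff V0 : V = 0 by rewrite {1}e V0 add0r.
(* u (Q1 P^_alpha x^be) = u-hat (P^_alpha Q2 x^be) vanishes when |be| < k - m2. *)
apply: (moment_orth_eq0 lu (qd_u (k - m2)%N)).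
  rewrite /V big_seq; apply: msize_sum_leq => a; rewrite mem_low => lt_a.
  exact/msizeZ_leq/(leq_trans (msize_mop u a)).
move=> be lt_be; have -> : V = Q1Phat i - M - S by rewrite e addrAC !addrK.
have orth a : (k - m2 <= mdeg a)%N -> u (mop u a * 'X_[be]) = 0.
  by move=> le_a; apply: (mop_orthX lu (qd_u _)); lia.
rewrite !mulrBl !(lin_functionalB lu) /M /S !mulr_suml !(lin_functional_sum lu).
rewrite !big_seq !big1 ?subr0 => [|a|a]; last 2 first.
- rewrite mem_blk => /eqP deg_a; rewrite -scalerAl (lin_functionalZ lu) orth ?mulr0 //.
  by rewrite deg_a; lia.
- by rewrite mem_mid // => /andP [le_a _]; rewrite -scalerAl (lin_functionalZ lu) orth ?mulr0.
rewrite -Q2_Lc /Q1Phat.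
have -> : Q2 * (Q1 * mop uh (nth 0%MM (blk D k) i) * 'X_[be]) =
  Q1 * (mop uh (nth 0%MM (blk D k) i) * (Q2 * 'X_[be])) by ring.
apply: (mop_orth luh (qd_uh _)); rewrite mdeg_nth_blk //.
by apply: leq_trans (msizeM_leq_add msize_Q2 (eq_leq (msizeX C be))) _; lia.
Qed.

Section ThetaStarFormulas.
Variables rs bs : seq MI.
Hypothesis CG_unit : CGmx Lc u bs ps rs \in unitmx.
Hypothesis Q1Phat_exp : forall i, exists c : MI -> C,
  Q1Phat i = \sum_(a <- rs) c a *: mop u a +
             \sum_(a <- blk D (k + m1)) (Q1Phat i)@_a *: mop u a.
Hypothesis Q1Phat_ker : forall i j, (j < size rs)%N -> colfun Lc bs ps j (Q1Phat i) = 0.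

Lemma Pcol_hat_Theta_star x : ~ inZ Q1 x ->
  Pcol uh k x = (ev x Q1)^-1 *: (specblk Q1 k (k + m1) *m
    Theta_star (CGfull Lc u bs ps rs (k + m1) 1 (fun al _ => ev x (mop u al)))).
Proof.
move=> /eqP Q1x_neq0; apply/matrixP => i j; rewrite [LHS]mxE [RHS]mxE.
rewrite -(Q1Phat_Theta (Phi := fun=> ev x) CG_unit Q1Phat_exp Q1Phat_ker) //.
- by rewrite /Q1Phat /ev mevalM mulKf.
- by move=> _; apply: lin_functional_ev.
Qed.

Lemma Hblk_hat_Theta_star :
  Hblk uh k = specblk Q1 k (k + m1) *m Theta_star (CGfull Lc u bs ps rs (k + m1) (bsz D k)
    (fun al j => Rent Lc u al (nth 0%MM (blk D k) j))).
Proof.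
apply/matrixP => i j; rewrite [LHS]mxE.
rewrite -(Q1Phat_Theta (Phi := fun j p => Lc (p * 'X_[nth 0%MM (blk D k) j]))
  CG_unit Q1Phat_exp Q1Phat_ker) //.
- by rewrite /Q1Phat mulrA.
- by move=> ?; apply: lin_functional_mulr.
Qed.

Lemma Hblk_hat_mulQ2_Theta_star : (m2 <= k)%N -> {in rs, forall a, k - m2 <= mdeg a}%N ->
  Hblk uh k *m (specblk Q2 (k - m2) k)^T = specblk Q1 k (k + m1) *m
    Theta_star (CGfull Lc u bs ps rs (k + m1) (bsz D (k - m2))
      (fun al j => if mdeg al == (k - m2)%N
                   then u (mop u al * 'X_[nth 0%MM (blk D (k - m2)) j]) else 0)).
Proof.
move=> le_m2k rs_deg; apply/matrixP => i j; rewrite [LHS]mxE.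
set ga := nth 0%MM (blk D (k - m2)) j; set al := nth 0%MM (blk D k) i.
rewrite -(Q1Phat_Theta (Phi := fun j p => u (p * 'X_[nth 0%MM (blk D (k - m2)) j]))
  CG_unit Q1Phat_exp Q1Phat_ker) => [|l|a l]; first last.
- move=> a_rs lt_l; case: eqP => // deg_a; apply/esym/(mop_orthX lu (qd_u _)).
  rewrite mdeg_nth_blk //; move: a_rs deg_a; rewrite mem_cat mem_blk.
  by case/orP => [/rs_deg | /eqP ->]; lia.
- exact: lin_functional_mulr.
set q := Q2 * 'X_[ga].
have -> : u (Q1Phat i * 'X_[ga]) = uh (mop uh al * q).
  by rewrite -Q2_Lc /q /Q1Phat -/al; congr Lc; ring.
have le_q : (msize q <= k.+1)%N.
  apply: leq_trans (msizeM_leq_add msize_Q2 (eq_leq (msizeX C ga))) _.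
  by rewrite mdeg_nth_blk //; lia.
(* The degree-k part of Q2 x^ga has the coefficients specQ Q2 ga; the rest has degree < k. *)
rewrite -[q in RHS](subrK (\sum_(b <- blk D k) q@_b *: 'X_[b])) mulrDr (lin_functionalD luh).
rewrite (mop_orth luh (qd_uh _)) ?mdeg_nth_blk ?msize_sub_top // add0r.
rewrite mulr_sumr (lin_functional_sum luh) (big_nth 0%MM) big_mkord.
by apply: eq_bigr => l _; rewrite !mxE -scalerAr (lin_functionalZ luh) mcoeffMX_specQ mulrC.
Qed.
End ThetaStarFormulas.
End BlockQuasiDeterminant.

Theorem mainTheorem6 (R : realType) (D : nat)
  (T : ('rV[R]_D -> R) -> R[i])
  (Q1 Q2 : mpoly D R[i]) (m1 m2 : nat)
  (Lc : mpoly D R[i] -> R[i])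
  (k : nat) (ps : seq 'rV[R[i]]_D) :
  (* u is a fast decreasing distribution (acting on C[x] through polyact) *)
  fast_decreasing T ->
  (* Q1, Q2 coprime of degrees m1, m2 *)
  Q1 != 0 -> Q2 != 0 ->
  m1 = (msize Q1).-1 -> m2 = (msize Q2).-1 ->
  mcoprime Q1 Q2 ->
  (* Z(Q2) and supp u are disjoint *)
  (forall x : 'rV[R]_D, in_supp T x -> ~ inZ Q2 (realpt x)) ->
  (* the linear functional u-check with Q2 u-check = u *)
  lin_functional Lc ->
  (forall P, Lc (Q2 * P) = polyact T P) ->
  let u := polyact T in
  let uh := fun P => Lc (Q1 * P) in          (* u-hat = Q1 u-check *)
  quasi_definite u -> quasi_definite uh ->
  (* distinct nodes p_1, ..., p_{r1} in Z(Q1), r1 = N_{k+m1-1} - N_{k-1} *)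
  size ps = (Nm1 D (k + m1) - Nm1 D k)%N -> uniq ps ->
  (forall p, p \in ps -> inZ Q1 p) ->
  let F := specblk Q1 k (k + m1) in
  (* (i) *)
  (CGmx Lc u (low D k) ps (low D (k + m1)) \in unitmx ->
     (forall x : 'rV[R[i]]_D, ~ inZ Q1 x ->
        Pcol uh k x = (ev x Q1)^-1 *: (F *m Theta_star
          (CGfull Lc u (low D k) ps (low D (k + m1)) (k + m1) 1
             (fun al _ => ev x (mop u al))))) /\
     Hblk uh k = F *m Theta_star
          (CGfull Lc u (low D k) ps (low D (k + m1)) (k + m1) (bsz D k)
             (fun al j => Rent Lc u al (nth 0%MM (blk D k) j)))) /\
  (* (ii) *)
  (forall bs : seq 'X_{1..D},
     (m2 <= k)%N ->
     size bs = (Nm1 D k - Nm1 D (k - m2))%N -> uniq bs ->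
     all (fun be => (mdeg be < k)%N) bs ->
     CGmx Lc u bs ps (mid D (k - m2) (k + m1)) \in unitmx ->
     (forall x : 'rV[R[i]]_D, ~ inZ Q1 x ->
        Pcol uh k x = (ev x Q1)^-1 *: (F *m Theta_star
          (CGfull Lc u bs ps (mid D (k - m2) (k + m1)) (k + m1) 1
             (fun al _ => ev x (mop u al))))) /\
     Hblk uh k *m (specblk Q2 (k - m2) k)^T = F *m Theta_star
          (CGfull Lc u bs ps (mid D (k - m2) (k + m1)) (k + m1) (bsz D (k - m2))
             (fun al j => if mdeg al == (k - m2)%N
                          then u (mop u al * 'X_[nth 0%MM (blk D (k - m2)) j])
                          else 0)) /\
     Hblk uh k = F *m Theta_star
          (CGfull Lc u bs ps (mid D (k - m2) (k + m1)) (k + m1) (bsz D k)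
             (fun al j => Rent Lc u al (nth 0%MM (blk D k) j)))).
Proof.
(* The analytic hypotheses only serve to construct u-check, which is given here. *)
move=> _ Q1_neq0 Q2_neq0 m1E m2E _ _ hLc Q2_Lc u uh qd_u qd_uh size_ps _ ps_Q1 F.
have msize_Q1 : (msize Q1 <= m1.+1)%N by rewrite m1E prednK // lt0n msize_poly_eq0.
have msize_Q2 : (msize Q2 <= m2.+1)%N by rewrite m2E prednK // lt0n msize_poly_eq0.
have le_Nm1k := leq_Nm1 D (leq_addr m1 k).
split=> [CG_unit | bs le_m2k size_bs _ /allP lt_bs CG_unit].
  have ker (i : 'I_(bsz D k)) j : (j < size (low D (k + m1)))%N ->
      colfun Lc (low D k) ps j (Q1Phat Lc Q1 i) = 0.
    apply: (colfun_Q1Phat_eq0 hLc qd_uh ps_Q1) => [be|]; first by rewrite mem_low.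
    by rewrite size_ps subnKC.
  have exp := Q1Phat_expand_low Lc u msize_Q1.
  by split; [apply: Pcol_hat_Theta_star | apply: Hblk_hat_Theta_star].
have le_mid : (k - m2 <= k + m1)%N by lia.
have ker (i : 'I_(bsz D k)) j : (j < size (mid D (k - m2) (k + m1)))%N ->
    colfun Lc bs ps j (Q1Phat Lc Q1 i) = 0.
  apply: (colfun_Q1Phat_eq0 hLc qd_uh ps_Q1) => //.
  rewrite size_mid // size_bs size_ps.
  by have := leq_Nm1 D (leq_subr m2 k); lia.
have exp i := Q1Phat_expand_mid hLc msize_Q1 qd_uh Q2_Lc msize_Q2 qd_u i le_m2k.
split; last split.
- exact: Pcol_hat_Theta_star.
- by apply: Hblk_hat_mulQ2_Theta_star => // a; rewrite mem_mid // => /andP [].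
- exact: Hblk_hat_Theta_star.
Qed.
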